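(* Let $\mu\in P_2(\mathbb{R}^d)$ be a probabilistic frame which is not tight, and let $\delta:=\lambda_d(\mu)-\lambda_1(\mu)>0$. Then for every tight probabilistic frame $\nu\in P_2(\mathbb{R}^d)$, $$W_2(\mu,\nu)\ge\frac{\delta}{4\,(M_2(\mu)+M_2(\nu))}.$$
   Context: For $p\ge1$, $P_p(\mathbb{R}^d)$ denotes the set of Borel probability measures $\mu$ on $\mathbb{R}^d$ with $M_p^p(\mu):=\int\|x\|^p\,d\mu(x)<\infty$, equipped with the $p$-Wasserstein distance $W_p(\mu,\nu)=\big(\inf_{\gamma\in\Gamma(\mu,\nu)}\iint\|x-y\|^p\,d\gamma(x,y)\big)^{1/p}$, where $\Gamma(\mu,\nu)$ is the set of couplings of $\mu$ and $\nu$. A probability measure $\mu$ on $\mathbb{R}^d$ is a probabilistic frame if there exist $0<A\le B<\infty$ with $A\|x\|^2\le\int\langle x,y\rangle^2\,d\mu(y)\le B\|x\|^2$ for all $x$; it is tight if this holds with $A=B$. For $\mu\in P_2(\mathbb{R}^d)$, $S_\mu=\int yy^\top d\mu(y)$ is the frame operator and $\lambda_1(\mu)\le\dots\le\lambda_d(\mu)$ denote its eigenvalues. *)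

(* R^d is modelled as d.-tuple R with the product
   (= Borel) sigma-algebra provided by MathComp-Analysis. *)
From HB Require Import structures.
From mathcomp Require Import all_boot all_order all_algebra.
From mathcomp Require Import all_classical all_reals all_analysis.
Set Implicit Arguments. Unset Strict Implicit. Unset Printing Implicit Defensive.
Import Order.TTheory GRing.Theory Num.Theory.
Local Open Scope classical_set_scope.
Local Open Scope ring_scope.

Notation vec R d := (d.-tuple R).

Section defs.
Variables (R : realType) (d : nat).

Definition dotv (x y : vec R d) : R := \sum_(i < d) tnth x i * tnth y i.
Definition sqnorm (x : vec R d) : R := \sum_(i < d) (tnth x i) ^+ 2.
Definition sqdist (x y : vec R d) : R := \sum_(i < d) (tnth x i - tnth y i) ^+ 2.

Definition M2sq (mu : probability (vec R d) R) : \bar R :=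
  (\int[mu]_x (sqnorm x)%:E)%E.
Definition inP2 (mu : probability (vec R d) R) : Prop := (M2sq mu < +oo)%E.
Definition M2 (mu : probability (vec R d) R) : R := Num.sqrt (fine (M2sq mu)).

Definition prob_frame (mu : probability (vec R d) R) : Prop :=
  exists A B : R, 0 < A /\ A <= B /\
    forall x : vec R d,
      ((A * sqnorm x)%:E <= \int[mu]_y ((dotv x y) ^+ 2)%:E)%E /\
      (\int[mu]_y ((dotv x y) ^+ 2)%:E <= (B * sqnorm x)%:E)%E.

Definition tight_frame (mu : probability (vec R d) R) : Prop :=
  exists A : R, 0 < A /\
    forall x : vec R d,
      ((A * sqnorm x)%:E <= \int[mu]_y ((dotv x y) ^+ 2)%:E)%E /\
      (\int[mu]_y ((dotv x y) ^+ 2)%:E <= (A * sqnorm x)%:E)%E.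

Definition frame_op (mu : probability (vec R d) R) : 'M[R]_d :=
  \matrix_(i, j) Rintegral mu setT (fun y : vec R d => tnth y i * tnth y j).

Definition lambda_min (mu : probability (vec R d) R) : R :=
  inf [set a : R | eigenvalue (frame_op mu) a].
Definition lambda_max (mu : probability (vec R d) R) : R :=
  sup [set a : R | eigenvalue (frame_op mu) a].

Definition coupling (mu nu : probability (vec R d) R)
    (g : probability (vec R d * vec R d)%type R) : Prop :=
  forall A : set (vec R d), measurable A ->
    g (A `*` setT) = mu A /\ g (setT `*` A) = nu A.

Definition W2 (mu nu : probability (vec R d) R) : R :=
  Num.sqrt (fine (ereal_inf
    [set (\int[g]_z (sqdist z.1 z.2)%:E)%E
      | g in [set g : probability (vec R d * vec R d)%type R | coupling mu nu g]])).

End defs.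

From HB Require Import structures.
From mathcomp Require Import all_boot all_order all_algebra.
From mathcomp Require Import all_classical all_reals all_analysis.
From mathcomp Require Import complex measurable_realfun ring lra.
Import Order.TTheory GRing.Theory Num.Theory.
Local Open Scope classical_set_scope.
Local Open Scope ring_scope.

(* If mu is not tight, its symmetric frame operator is not scalar, so by the
   spectral theorem it has two distinct eigenvalues and delta > 0. For an
   eigenvector v with eigenvalue e, the integral of <v,y>^2 is e |v|^2 under mu
   and A |v|^2 under a tight frame nu with bound A. Along any coupling of mu and
   nu, the pointwise bound (AM-GM, t > 0)
     <v,x>^2 - <v,y>^2 <= |v|^2 (t/2 |x - y|^2 + (|x|^2 + |y|^2) / t)
   is symmetric in x and y and integrates to
     |e - A| <= t/2 C + (M_2(mu)^2 + M_2(nu)^2) / t,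
   where C is the transport cost of the coupling. Hence delta <= t C + 2 s^2 / t
   with s = M_2(mu) + M_2(nu), and t = 4 s^2 / delta gives C >= (delta/(4 s))^2. *)

Lemma symmx_scalar_or_eigenvalue_lt {R : rcfType} {n : nat} (S : 'M[R]_n) : S^T = S ->
  (exists c, S = c%:M) \/ exists a b, [/\ a < b, eigenvalue S a & eigenvalue S b].
Proof.
case: n S => [|n] S Ssym; first by left; exists 0; apply/matrixP => -[].
pose SC := map_mx (real_complex R) S.
have SCherm : SC \is hermsymmx.
  apply: realsym_hermsym.
    by apply/is_hermitianmxP; rewrite expr0 scale1r map_mx_id // map_trmx Ssym.
  by apply/mxOverP => i j; rewrite mxE; apply/complex_realP; eexists.
have /orthomx_spectralP SCE := hermitian_normalmx SCherm.
have /mxOverP Dreal := hermitian_spectral_diag_real SCherm.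
set P := spectralmx SC in SCE; set D := spectral_diag SC in SCE Dreal.
have Punit : P \in unitmx by apply: spectral_unit.
pose r k := complex.Re (D 0 k).
have rE k : real_complex R (r k) = D 0 k by apply: RRe_real.
have eigSC k : eigenvalue SC (D 0 k).
  apply/eigenvalueP; exists (delta_mx 0 k *m P).
    rewrite {1}SCE !mulmxA mulmxK // -[delta_mx 0 k *m diag_mx D]rowE.
    by rewrite row_diag_mx -scalemxAl.
  rewrite mul_mx_rowfree_eq0 ?row_free_unit //; apply/eqP => /matrixP/(_ 0 k).
  by rewrite !mxE !eqxx; apply/eqP; rewrite oner_eq0.
have eigS k : eigenvalue S (r k).
  by rewrite -(eigenvalue_map (real_complex R)); have := eigSC k; rewrite -rE.
have [rconst|] := boolP [forall k, r k == r 0].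
  left; exists (r 0); apply: (@map_mx_inj _ _ (real_complex R)).
  rewrite map_scalar_mx -/SC SCE.
  have -> : diag_mx D = (D 0 0)%:M.
    apply/matrixP => i j; rewrite !mxE; congr (_ *+ _).
    by rewrite -[D 0 i]rE -[D 0 0]rE (eqP (forallP rconst i)).
  by rewrite mul_mx_scalar -scalemxAl mulVmx // scalemx1 -[D 0 0]rE.
case/forallPn => k rk0; right.
by case: (ltgtP (r k) (r 0)) rk0 => // rk _;
  [exists (r k), (r 0) | exists (r 0), (r k)].
Qed.

Section euclid.
Context {R : realType} {d : nat}.
Local Notation V := (vec R d).
Implicit Types x y : V.

Lemma sqnorm_ge0 x : 0 <= sqnorm x.
Proof. by apply: sumr_ge0 => i _; exact: sqr_ge0. Qed.

Lemma sqdist_ge0 x y : 0 <= sqdist x y.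
Proof. by apply: sumr_ge0 => i _; exact: sqr_ge0. Qed.

Lemma sqdistC x y : sqdist x y = sqdist y x.
Proof. by apply: eq_bigr => i _; rewrite -sqrrN opprB. Qed.

Lemma sqdist_le x y : sqdist x y <= 2 * sqnorm x + 2 * sqnorm y.
Proof.
rewrite /sqdist /sqnorm !mulr_sumr -big_split /=; apply: ler_sum => i _.
have := sqr_ge0 (tnth x i + tnth y i); nra.
Qed.

Lemma tnth_sqr_le_sqnorm x i : tnth x i ^+ 2 <= sqnorm x.
Proof.
by rewrite /sqnorm (bigD1 i) //= lerDl; apply: sumr_ge0 => j _; exact: sqr_ge0.
Qed.

Lemma sqnorm_eq0 x : sqnorm x = 0 -> forall i, tnth x i = 0.
Proof.
move=> x0 i; apply/eqP; rewrite -sqrf_eq0 eq_le sqr_ge0 andbT -x0.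
exact: tnth_sqr_le_sqnorm.
Qed.

Lemma dotv_sqr_le x y : dotv x y ^+ 2 <= sqnorm x * sqnorm y.
Proof.
have [x0|x_neq0] := eqVneq (sqnorm x) 0.
  by rewrite x0 mul0r /dotv big1 ?expr0n // => i _; rewrite sqnorm_eq0 ?mul0r.
have x_gt0 : 0 < sqnorm x by rewrite lt_def x_neq0 sqnorm_ge0.
pose s := dotv x y / sqnorm x.
have : 0 <= \sum_i (s * tnth x i - tnth y i) ^+ 2.
  by apply: sumr_ge0 => i _; exact: sqr_ge0.
have -> : \sum_i (s * tnth x i - tnth y i) ^+ 2 =
    sqnorm y - dotv x y ^+ 2 / sqnorm x.
  transitivity (s ^+ 2 * sqnorm x - 2 * s * dotv x y + sqnorm y).
    rewrite /sqnorm /dotv !mulr_sumr -sumrN -!big_split /=.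
    by apply: eq_bigr => i _; ring.
  by rewrite /s; field.
by rewrite subr_ge0 ler_pdivrMr // mulrC.
Qed.

Lemma dotvB_sqr_le v x y : (dotv v x - dotv v y) ^+ 2 <= sqnorm v * sqdist x y.
Proof.
pose z : V := [tuple tnth x i - tnth y i | i < d].
have -> : dotv v x - dotv v y = dotv v z.
  by rewrite /dotv -sumrB; apply: eq_bigr => i _; rewrite tnth_mktuple mulrBr.
have -> : sqdist x y = sqnorm z by apply: eq_bigr => i _; rewrite tnth_mktuple.
exact: dotv_sqr_le.
Qed.

Lemma dotv_sqr_le_shift v x y t : 0 < t ->
  dotv v x ^+ 2 <=
  dotv v y ^+ 2 + sqnorm v * (t / 2 * sqdist x y + t^-1 * (sqnorm x + sqnorm y)).
Proof.
move=> t_gt0; set p := dotv v x; set q := dotv v y.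
(* AM-GM applied to [p^2 - q^2 = (p - q) (p + q)]. *)
have amgm : p ^+ 2 - q ^+ 2 <= t / 2 * (p - q) ^+ 2 + (p + q) ^+ 2 / (2 * t).
  rewrite -subr_ge0; have -> : t / 2 * (p - q) ^+ 2 + (p + q) ^+ 2 / (2 * t)
      - (p ^+ 2 - q ^+ 2) = (t * (p - q) - (p + q)) ^+ 2 / (2 * t).
    by field; rewrite gt_eqF.
  by rewrite divr_ge0 ?sqr_ge0 // mulr_ge0 // ltW.
have pq_diff : (p - q) ^+ 2 <= sqnorm v * sqdist x y := dotvB_sqr_le v x y.
have pq_sum : (p + q) ^+ 2 <= 2 * (sqnorm v * (sqnorm x + sqnorm y)).
  have := dotv_sqr_le v x; have := dotv_sqr_le v y; have := sqr_ge0 (p - q).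
  rewrite -/p -/q; nra.
have t2_ge0 : 0 <= t / 2 by rewrite divr_ge0 // ltW.
have t2_inv_ge0 : 0 <= (2 * t)^-1 by rewrite invr_ge0 mulr_ge0 // ltW.
have := ler_wpM2l t2_ge0 pq_diff; have := ler_wpM2r t2_inv_ge0 pq_sum.
have -> : sqnorm v * (t / 2 * sqdist x y + t^-1 * (sqnorm x + sqnorm y)) =
    t / 2 * (sqnorm v * sqdist x y)
    + 2 * (sqnorm v * (sqnorm x + sqnorm y)) / (2 * t).
  by field; rewrite gt_eqF.
lra.
Qed.

Definition qform (S : 'M[R]_d) x : R :=
  \sum_i \sum_j tnth x i * tnth x j * S i j.

Lemma qform_scalar c x : qform c%:M x = c * sqnorm x.
Proof.
rewrite /qform /sqnorm mulr_sumr; apply: eq_bigr => i _.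
rewrite (bigD1 i) //= big1 => [|j /negbTE ji]; last by rewrite !mxE eq_sym ji mulr0.
by rewrite !mxE eqxx addr0 mulr1n mulrC expr2.
Qed.

Lemma eigenvalue_qform (S : 'M[R]_d) a : eigenvalue S a ->
  exists2 v, 0 < sqnorm v & qform S v = a * sqnorm v.
Proof.
move/eigenvalueP => [w wS w_neq0]; exists [tuple w 0 i | i < d].
  rewrite lt_def sqnorm_ge0 andbT; apply: contra w_neq0 => /eqP/sqnorm_eq0 w0.
  by apply/eqP/matrixP => i j; rewrite (ord1 i) mxE -(w0 j) tnth_mktuple.
rewrite /qform /sqnorm exchange_big mulr_sumr; apply: eq_bigr => j _.
move/matrixP: wS => /(_ 0 j); rewrite !mxE !tnth_mktuple => wSj.
transitivity (w 0 j * \sum_i w 0 i * S i j).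
  by rewrite mulr_sumr; apply: eq_bigr => i _; rewrite !tnth_mktuple; ring.
by rewrite wSj; ring.
Qed.

Lemma measurable_sqnorm : measurable_fun setT (@sqnorm R d).
Proof.
by apply: measurable_sum => i; apply: measurable_funX; exact: measurable_tnth.
Qed.

Lemma measurable_dotv x : measurable_fun setT (dotv x).
Proof.
by apply: measurable_sum => i; apply: measurable_funM => //; exact: measurable_tnth.
Qed.

Lemma measurable_sqdist {dT} {T : measurableType dT} (p q : T -> V) :
  measurable_fun setT p -> measurable_fun setT q ->
  measurable_fun setT (fun u => sqdist (p u) (q u)).
Proof.
move=> mp mq; apply: measurable_sum => i; apply: measurable_funX.
by apply: measurable_funB; exact: measurableT_comp (measurable_tnth i) _.
Qed.

End euclid.

Section frame_operator.
Context {R : realType} {d : nat}.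
Variable mu : probability (vec R d) R.
Hypothesis mu2 : inP2 mu.
Local Notation V := (vec R d).

Lemma integrable_sqnorm : mu.-integrable setT (fun y => (sqnorm y)%:E).
Proof.
apply/integrableP; split; first exact: measurableT_comp (@measurable_sqnorm R d).
under eq_integral => y _ do rewrite gee0_abs ?lee_fin ?sqnorm_ge0 //.
exact: mu2.
Qed.

Lemma integrable_tnthM i j :
  mu.-integrable setT (fun y : V => (tnth y i * tnth y j)%:E).
Proof.
apply: (le_integrable measurableT _ _ integrable_sqnorm).
  by apply/measurableT_comp/measurable_funM => //; exact: measurable_tnth.
move=> y _ /=; rewrite lee_fin [X in _ <= X]ger0_norm ?sqnorm_ge0 // normrM.
have := tnth_sqr_le_sqnorm y i; have := tnth_sqr_le_sqnorm y j.
rewrite -(real_normK (num_real (tnth y i))) -(real_normK (num_real (tnth y j))).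
have := normr_ge0 (tnth y i); have := normr_ge0 (tnth y j); nra.
Qed.

Lemma integral_dotv_sqr x :
  (\int[mu]_y ((dotv x y) ^+ 2)%:E = (qform (frame_op mu) x)%:E)%E.
Proof.
have dotv_sqrE y : ((dotv x y) ^+ 2)%:E =
    (\sum_i \sum_j (tnth x i * tnth x j)%:E * (tnth y i * tnth y j)%:E)%E.
  rewrite /dotv expr2 mulr_suml -sumEFin; apply: eq_bigr => i _.
  rewrite mulr_sumr -sumEFin; apply: eq_bigr => j _.
  by rewrite -EFinM; congr (_%:E); ring.
under eq_integral => y _ do rewrite dotv_sqrE.
rewrite /qform -sumEFin (integral_sum measurableT); last first.
  move=> i; apply: (integrable_sum measurableT) => j _.
  exact/(integrableZl measurableT)/integrable_tnthM.
apply: eq_bigr => i _; rewrite -sumEFin (integral_sum measurableT); last first.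
  by move=> j; exact/(integrableZl measurableT)/integrable_tnthM.
apply: eq_bigr => j _; rewrite (integralZl measurableT) ?integrable_tnthM //.
rewrite mxE /Rintegral [RHS]EFinM fineK //.
exact: (integrable_fin_num measurableT (integrable_tnthM i j)).
Qed.

Lemma frame_op_sym : (frame_op mu)^T = frame_op mu.
Proof.
apply/matrixP => i j; rewrite !mxE /Rintegral; congr fine.
by apply: eq_integral => y _; rewrite mulrC.
Qed.

Lemma M2sqE : M2sq mu = ((M2 mu) ^+ 2)%:E.
Proof.
have M2sq_ge0 : (0 <= M2sq mu)%E.
  by apply: integral_ge0 => y _; rewrite lee_fin sqnorm_ge0.
by rewrite /M2 sqr_sqrtr ?fine_ge0 // fineK // ge0_fin_numE.
Qed.

Lemma frame_op_eigenvalue_bounds e :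
  eigenvalue (frame_op mu) e -> 0 <= e <= (M2 mu) ^+ 2.
Proof.
move=> /eigenvalue_qform [v v_gt0 qv].
have := integral_dotv_sqr v; rewrite qv => ev.
apply/andP; split.
  rewrite -(pmulr_lge0 _ v_gt0) -lee_fin -ev.
  by apply: integral_ge0 => y _; rewrite lee_fin sqr_ge0.
rewrite -(ler_pM2r v_gt0) -lee_fin -ev mulrC EFinM -M2sqE.
rewrite /M2sq -ge0_integralZl_EFin ?sqnorm_ge0 //; last first.
- exact: measurableT_comp (@measurable_sqnorm R d).
- by move=> y _; rewrite lee_fin sqnorm_ge0.
apply: ge0_le_integral => //.
- by move=> y _; rewrite lee_fin sqr_ge0.
- by apply: measurableT_comp => //; apply: measurable_funX; exact: measurable_dotv.
- by apply: measurable_funeM; apply: measurableT_comp => //; exact: measurable_sqnorm.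
- by move=> y _; rewrite -EFinM lee_fin dotv_sqr_le.
Qed.

End frame_operator.

Section nonneg_integrals.
Context {dT : measure_display} {T : measurableType dT} {R : realType}.
Variable P : {measure set T -> \bar R}.

Lemma ge0_integral_lincomb (a b : R) (f h : T -> R) : 0 <= a -> 0 <= b ->
  measurable_fun setT f -> measurable_fun setT h ->
  (forall x, 0 <= f x) -> (forall x, 0 <= h x) ->
  (\int[P]_x (a * f x + b * h x)%:E =
   a%:E * \int[P]_x (f x)%:E + b%:E * \int[P]_x (h x)%:E)%E.
Proof.
move=> a_ge0 b_ge0 mf mh f_ge0 h_ge0.
under eq_integral do rewrite EFinD !EFinM.
rewrite ge0_integralD //; first last.
- by apply: measurable_funeM; exact: measurableT_comp.
- by move=> x _; rewrite -EFinM lee_fin mulr_ge0.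
- by apply: measurable_funeM; exact: measurableT_comp.
- by move=> x _; rewrite -EFinM lee_fin mulr_ge0.
by rewrite !ge0_integralZl_EFin //; try exact: measurableT_comp;
  move=> x _; rewrite lee_fin.
Qed.

Lemma ge0_integral_marginal {dU} {U : measurableType dU}
    (Q : {measure set U -> \bar R}) (p : T -> U) (f : U -> R) :
  measurable_fun setT p -> (forall A, measurable A -> P (p @^-1` A) = Q A) ->
  measurable_fun setT f -> (forall y, 0 <= f y) ->
  (\int[P]_x (f (p x))%:E = \int[Q]_y (f y)%:E)%E.
Proof.
move=> mp PQ mf f_ge0.
rewrite [RHS](eq_measure_integral (pushforward P p)) => [|A mA _]; last first.
  exact/esym/PQ.
rewrite [RHS]ge0_integral_pushforward ?preimage_setT //.
  exact: measurableT_comp.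
by move=> y _; rewrite lee_fin.
Qed.

End nonneg_integrals.

Section couplings.
Context {R : realType} {d : nat}.
Local Notation V := (vec R d).
Variables (mu nu : probability V R).

Definition transport_cost (g : probability (V * V)%type R) : \bar R :=
  (\int[g]_z (sqdist z.1 z.2)%:E)%E.

Lemma coupling_integral_fst g (f : V -> R) : coupling mu nu g ->
  measurable_fun setT f -> (forall y, 0 <= f y) ->
  (\int[g]_z (f z.1)%:E = \int[mu]_y (f y)%:E)%E.
Proof.
move=> g_cpl; apply: ge0_integral_marginal => // A mA.
by rewrite -setXT; case: (g_cpl A mA).
Qed.

Lemma coupling_integral_snd g (f : V -> R) : coupling mu nu g ->
  measurable_fun setT f -> (forall y, 0 <= f y) ->
  (\int[g]_z (f z.2)%:E = \int[nu]_y (f y)%:E)%E.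
Proof.
move=> g_cpl; apply: ge0_integral_marginal => // A mA.
by rewrite -setTX; case: (g_cpl A mA).
Qed.

Lemma coupling_product : coupling mu nu (mu \x nu)%E.
Proof.
move=> A mA; split; rewrite [LHS]product_measure1E //.
  by rewrite -[RHS]mule1; congr (_ * _)%E; exact: probability_setT.
by rewrite -[RHS]mul1e; congr (_ * _)%E; exact: probability_setT.
Qed.

Hypotheses (mu2 : inP2 mu) (nu2 : inP2 nu).

Lemma transport_cost_le g : coupling mu nu g ->
  (transport_cost g <= (2 * M2 mu ^+ 2 + 2 * M2 nu ^+ 2)%:E)%E.
Proof.
move=> g_cpl; apply: (@le_trans _ _
    (\int[g]_z (2 * sqnorm z.1 + 2 * sqnorm z.2)%:E)%E).
  apply: ge0_le_integral => //.
  - by move=> z _; rewrite lee_fin sqdist_ge0.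
  - exact/measurableT_comp/measurable_sqdist.
  - apply: measurableT_comp => //; apply: measurable_funD;
      apply: measurable_funM => //; exact: measurableT_comp measurable_sqnorm _.
  - by move=> z _; rewrite lee_fin sqdist_le.
have msqnorm_fst : measurable_fun setT (fun z : V * V => sqnorm z.1).
  exact: measurableT_comp measurable_sqnorm measurable_fst.
have msqnorm_snd : measurable_fun setT (fun z : V * V => sqnorm z.2).
  exact: measurableT_comp measurable_sqnorm measurable_snd.
rewrite ge0_integral_lincomb // => [|z|z]; try exact: sqnorm_ge0.
rewrite (coupling_integral_fst _ _ g_cpl measurable_sqnorm sqnorm_ge0).
rewrite (coupling_integral_snd _ _ g_cpl measurable_sqnorm sqnorm_ge0).
by rewrite -!/(M2sq _) !M2sqE // -!EFinM -EFinD.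
Qed.

Lemma W2_ge c : 0 <= c ->
  (forall g, coupling mu nu g -> ((c ^+ 2)%:E <= transport_cost g)%E) ->
  c <= W2 mu nu.
Proof.
move=> c_ge0 cost_ge.
pose S := [set transport_cost g | g in [set g | coupling mu nu g]].
have inf_ge : ((c ^+ 2)%:E <= ereal_inf S)%E.
  by apply/ereal_infP => _ [g g_cpl <-]; exact: cost_ge.
have inf_ge0 : (0 <= ereal_inf S)%E.
  by apply: le_trans inf_ge; rewrite lee_fin sqr_ge0.
have inf_fin : ereal_inf S \is a fin_num.
  rewrite ge0_fin_numE //.
  have S_prod : S (transport_cost (mu \x nu)%E).
    by exists (mu \x nu)%E => //; exact: coupling_product.
  apply: le_lt_trans (ereal_inf_lbound S_prod) _.
  exact: le_lt_trans (transport_cost_le _ coupling_product) (ltry _).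
change (c <= Num.sqrt (fine (ereal_inf S))).
rewrite -(ger0_norm c_ge0) -sqrtr_sqr ler_sqrt ?fine_ge0 -?lee_fin ?fineK //.
Qed.

End couplings.

Section tight_comparison.
Context {R : realType} {d : nat}.
Local Notation V := (vec R d).

Lemma integral_dotv_sqr_le_shift {dT} {T : measurableType dT}
    (P : {measure set T -> \bar R}) (p q : T -> V) v t :
  measurable_fun setT p -> measurable_fun setT q -> 0 < t ->
  (\int[P]_z (dotv v (p z) ^+ 2)%:E <= \int[P]_z (dotv v (q z) ^+ 2)%:E +
   (sqnorm v)%:E * \int[P]_z (t / 2 * sqdist (p z) (q z)
                              + t^-1 * (sqnorm (p z) + sqnorm (q z)))%:E)%E.
Proof.
move=> mp mq t_gt0.
have mdotv_sqr (r : T -> V) : measurable_fun setT r ->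
    measurable_fun setT (fun z => (dotv v (r z) ^+ 2)%:E).
  move=> mr; apply: measurableT_comp => //; apply: measurable_funX.
  exact: measurableT_comp (measurable_dotv v) mr.
have mH : measurable_fun setT (fun z =>
    (t / 2 * sqdist (p z) (q z) + t^-1 * (sqnorm (p z) + sqnorm (q z)))%:E).
  apply: measurableT_comp => //; apply: measurable_funD.
    by apply: measurable_funM => //; exact: measurable_sqdist.
  apply: measurable_funM => //; apply: measurable_funD;
    exact: measurableT_comp measurable_sqnorm _.
have H_ge0 z : 0 <= t / 2 * sqdist (p z) (q z) + t^-1 * (sqnorm (p z) + sqnorm (q z)).
  by rewrite addr_ge0 ?mulr_ge0 ?addr_ge0 ?sqdist_ge0 ?sqnorm_ge0 ?invr_ge0 ?ltW.
rewrite -ge0_integralZl_EFin ?sqnorm_ge0 //; last by move=> z _; rewrite lee_fin.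
rewrite -ge0_integralD //; last 4 first.
- by move=> z _; rewrite lee_fin sqr_ge0.
- exact: mdotv_sqr.
- by move=> z _; rewrite -EFinM lee_fin mulr_ge0 ?sqnorm_ge0.
- exact: measurable_funeM.
apply: ge0_le_integral => //.
- by move=> z _; rewrite lee_fin sqr_ge0.
- exact: mdotv_sqr.
- by apply: emeasurable_funD; [exact: mdotv_sqr | exact: measurable_funeM].
- by move=> z _; rewrite -EFinM -EFinD lee_fin dotv_sqr_le_shift.
Qed.

Variables (mu nu : probability V R) (g : probability (V * V)%type R).
Hypotheses (mu2 : inP2 mu) (nu2 : inP2 nu) (g_cpl : coupling mu nu g).

Lemma transport_cost_fin : transport_cost g \is a fin_num.
Proof.
rewrite ge0_fin_numE; last by apply: integral_ge0 => z _; rewrite lee_fin sqdist_ge0.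
exact: le_lt_trans (transport_cost_le _ _ mu2 nu2 _ g_cpl) (ltry _).
Qed.

Lemma integral_shift_cost t : 0 < t ->
  (\int[g]_z (t / 2 * sqdist z.1 z.2 + t^-1 * (sqnorm z.1 + sqnorm z.2))%:E =
   (t / 2 * fine (transport_cost g) + t^-1 * (M2 mu ^+ 2 + M2 nu ^+ 2))%:E)%E.
Proof.
move=> t_gt0.
have msqnorm_fst : measurable_fun setT (fun z : V * V => sqnorm z.1).
  exact: measurableT_comp measurable_sqnorm measurable_fst.
have msqnorm_snd : measurable_fun setT (fun z : V * V => sqnorm z.2).
  exact: measurableT_comp measurable_sqnorm measurable_snd.
rewrite ge0_integral_lincomb ?divr_ge0 ?invr_ge0 ?ltW //; first last.
- by move=> z; rewrite addr_ge0 ?sqnorm_ge0.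
- by move=> z; exact: sqdist_ge0.
- exact: measurable_funD.
- exact: measurable_sqdist.
under [X in (_ + _ * X)%E]eq_integral do rewrite EFinD.
rewrite ge0_integralD //; first last.
- exact: measurableT_comp.
- by move=> z _; rewrite lee_fin sqnorm_ge0.
- exact: measurableT_comp.
- by move=> z _; rewrite lee_fin sqnorm_ge0.
rewrite (coupling_integral_fst _ _ _ _ g_cpl measurable_sqnorm sqnorm_ge0).
rewrite (coupling_integral_snd _ _ _ _ g_cpl measurable_sqnorm sqnorm_ge0).
rewrite -!/(M2sq _) !M2sqE // -EFinD.
by rewrite -/(transport_cost g) -(fineK transport_cost_fin) -!EFinM -EFinD.
Qed.

Lemma eigenvalue_dist_tight_le A e t :
  (forall x, \int[nu]_y ((dotv x y) ^+ 2)%:E = (A * sqnorm x)%:E)%E ->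
  0 < t -> eigenvalue (frame_op mu) e ->
  `|e - A| <= t / 2 * fine (transport_cost g) + t^-1 * (M2 mu ^+ 2 + M2 nu ^+ 2).
Proof.
move=> nu_tight t_gt0 /eigenvalue_qform [v v_gt0 qv].
have mdotv_sqr : measurable_fun setT (fun y => dotv v y ^+ 2).
  by apply: measurable_funX; exact: measurable_dotv.
have int_fst : (\int[g]_z ((dotv v z.1) ^+ 2)%:E = (e * sqnorm v)%:E)%E.
  rewrite (coupling_integral_fst _ _ _ _ g_cpl mdotv_sqr) => [|y]; last exact: sqr_ge0.
  by rewrite integral_dotv_sqr // qv.
have int_snd : (\int[g]_z ((dotv v z.2) ^+ 2)%:E = (A * sqnorm v)%:E)%E.
  rewrite (coupling_integral_snd _ _ _ _ g_cpl mdotv_sqr) => [|y]; last exact: sqr_ge0.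
  exact: nu_tight.
have shift_fst := integral_dotv_sqr_le_shift g _ _ v _
  measurable_fst measurable_snd t_gt0.
have shift_snd := integral_dotv_sqr_le_shift g _ _ v _
  measurable_snd measurable_fst t_gt0.
have cost_sym :
    (\int[g]_z (t / 2 * sqdist z.2 z.1 + t^-1 * (sqnorm z.2 + sqnorm z.1))%:E
    = \int[g]_z (t / 2 * sqdist z.1 z.2 + t^-1 * (sqnorm z.1 + sqnorm z.2))%:E)%E.
  by apply: eq_integral => z _; rewrite sqdistC (addrC (sqnorm z.2)).
rewrite cost_sym in shift_snd.
rewrite integral_shift_cost // int_fst int_snd -EFinM -EFinD lee_fin in shift_fst.
rewrite integral_shift_cost // int_fst int_snd -EFinM -EFinD lee_fin in shift_snd.
set K := t / 2 * _ + _ in shift_fst shift_snd *.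
rewrite ler_norml; apply/andP; split.
  by rewrite -(ler_pM2r v_gt0) mulNr mulrBl lerNl opprB lerBlDl (mulrC K).
by rewrite -(ler_pM2r v_gt0) mulrBl lerBlDl (mulrC K).
Qed.

End tight_comparison.

Lemma frame_not_tight_eigenvalues {R : realType} {d : nat}
    (mu : probability (vec R d) R) :
  inP2 mu -> prob_frame mu -> ~ tight_frame mu ->
  exists a b, [/\ a < b, eigenvalue (frame_op mu) a & eigenvalue (frame_op mu) b].
Proof.
move=> mu2 [A [B [A_gt0 [_ mu_frame]]]] mu_not_tight.
have [[c Sc]|//] := symmx_scalar_or_eigenvalue_lt _ (frame_op_sym mu).
exfalso; apply: mu_not_tight; exists (Num.max A c).
split; first by rewrite lt_max A_gt0.
move=> x; rewrite integral_dotv_sqr // Sc qform_scalar.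
have [x0|x_neq0] := eqVneq (sqnorm x) 0; first by rewrite x0 !mulr0.
have x_gt0 : 0 < sqnorm x by rewrite lt_def x_neq0 sqnorm_ge0.
have := (mu_frame x).1; rewrite integral_dotv_sqr // Sc qform_scalar.
by rewrite lee_fin ler_pM2r // => /max_r ->.
Qed.

Section real_sets.
Variable R : realType.
Implicit Types E : set R.

Lemma inf_lt_sup E a b : has_sup E -> has_lbound E -> E a -> E b -> a < b ->
  inf E < sup E.
Proof.
move=> E_sup E_inf Ea Eb ab.
exact: le_lt_trans (ge_inf E_inf Ea) (lt_le_trans ab (sup_upper_bound E_sup Eb)).
Qed.

Lemma sup_sub_inf_le E c K : E !=set0 -> (forall e, E e -> `|e - c| <= K) ->
  sup E - inf E <= 2 * K.
Proof.
move=> E_n0 E_near.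
have E_le e : E e -> e <= c + K.
  by move/E_near; rewrite ler_norml lerBlDl addrC => /andP[].
have E_ge e : E e -> c - K <= e.
  by move/E_near; rewrite ler_norml lerBrDl addrC -lerBrDl => /andP[].
have sup_le : sup E <= c + K by apply: ge_sup.
have inf_ge : c - K <= inf E by apply: lb_le_inf.
lra.
Qed.

End real_sets.

(* The choice t = 4 s^2 / delta in [delta <= 2 (t/2 r + Q/t)]. *)
Lemma sqr_gap_div_le (R : realFieldType) (delta s r Q : R) :
  0 < delta -> 0 < s -> Q <= s ^+ 2 ->
  delta <= 2 * ((4 * s ^+ 2 / delta) / 2 * r + (4 * s ^+ 2 / delta)^-1 * Q) ->
  (delta / (4 * s)) ^+ 2 <= r.
Proof.
move=> delta_gt0 s_gt0 Q_le.
have s2_gt0 : 0 < s ^+ 2 by rewrite exprn_gt0.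
have -> : 2 * ((4 * s ^+ 2 / delta) / 2 * r + (4 * s ^+ 2 / delta)^-1 * Q) =
    4 * s ^+ 2 * r / delta + Q / s ^+ 2 * (delta / 2).
  by field; rewrite !gt_eqF.
have Q_term : Q / s ^+ 2 * (delta / 2) <= delta / 2.
  apply: ler_piMl; first by rewrite divr_ge0 // ltW.
  by rewrite ler_pdivrMr // mul1r.
move=> gap_le; have : delta / 2 <= 4 * s ^+ 2 * r / delta by lra.
rewrite ler_pdivlMr // => sqr_le.
have r_ge0 : 0 <= r.
  rewrite -(pmulr_rge0 _ (mulr_gt0 (ltr0Sn _ 3) s2_gt0)).
  by apply: le_trans sqr_le; rewrite mulr_ge0 ?divr_ge0 ?ltW.
rewrite expr_div_n ler_pdivrMr ?exprn_gt0 ?mulr_gt0 // exprMn.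
have := mulr_ge0 (ltW s2_gt0) r_ge0; lra.
Qed.

Theorem mainTheorem2 (R : realType) (d : nat) (mu : probability (vec R d) R) :
  inP2 mu -> prob_frame mu -> ~ tight_frame mu ->
  0 < lambda_max mu - lambda_min mu /\
  forall nu : probability (vec R d) R,
    inP2 nu -> tight_frame nu ->
    (lambda_max mu - lambda_min mu) / (4 * (M2 mu + M2 nu)) <= W2 mu nu.
Proof.
move=> mu2 mu_frame mu_not_tight.
have [a [b [ab Ea Eb]]] := frame_not_tight_eigenvalues _ mu2 mu_frame mu_not_tight.
have eig_bnd := frame_op_eigenvalue_bounds _ mu2.
have eig_sup : has_sup [set e | eigenvalue (frame_op mu) e].
  by split; [exists a | exists (M2 mu ^+ 2) => e /eig_bnd/andP[]].
have eig_inf : has_lbound [set e | eigenvalue (frame_op mu) e].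
  by exists 0 => e /eig_bnd/andP[].
have gap_gt0 : 0 < lambda_max mu - lambda_min mu.
  by rewrite subr_gt0; exact: inf_lt_sup eig_sup eig_inf Ea Eb ab.
split=> // nu nu2 [A [_ nu_tight]].
have nu_tightE x : (\int[nu]_y ((dotv x y) ^+ 2)%:E = (A * sqnorm x)%:E)%E.
  by apply/le_anti/andP; split; [exact: (nu_tight x).2 | exact: (nu_tight x).1].
have M2_ge0 (m : probability (vec R d) R) : 0 <= M2 m by exact: sqrtr_ge0.
have := addr_ge0 (M2_ge0 mu) (M2_ge0 nu); rewrite le_eqVlt => /predU1P[s0|s_gt0].
  by rewrite -s0 mulr0 invr0 mulr0; exact: sqrtr_ge0.
apply: W2_ge => // [|g g_cpl]; first by rewrite divr_ge0 ?mulr_ge0 ?ltW.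
rewrite -(fineK (transport_cost_fin _ _ _ mu2 nu2 g_cpl)) lee_fin.
apply: (@sqr_gap_div_le _ _ _ _ (M2 mu ^+ 2 + M2 nu ^+ 2)) => //.
  by have := mulr_ge0 (M2_ge0 mu) (M2_ge0 nu); rewrite sqrrD; lra.
apply: sup_sub_inf_le => [|e /eigenvalue_dist_tight_le]; first by exists a.
by apply => //; rewrite divr_gt0 ?mulr_gt0 ?exprn_gt0.
Qed.
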